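(* Let $1\leq n<\omega$ and let $\kappa$ be a cardinal with $\Theta_n>\kappa$. Then $\Theta_{n+1}>\kappa^+$.
   Context: For $1\leq n<\omega$, $\Theta_n$ is the least cardinal $\theta$ such that for every function $f:\theta^n\to\omega$ there is a sequence $\langle A_i\mid i<n\rangle$ of infinite subsets of $\theta$ such that $f\restriction\prod_{i<n}A_i$ is constant. (Here $\theta^n$ is the set of all $n$-tuples from $\theta$.) *)

(* Cardinals are represented by types (with the classical,
   choice-ful metatheory every type has a cardinality, which is a cardinal);
   cardinal comparison is via injections. *)
From Stdlib Require Import Arith List.

Definition le_card (A B : Type) : Prop :=
  exists f : A -> B, forall x y, f x = f y -> x = y.

Definition lt_card (A B : Type) : Prop := le_card A B /\ ~ le_card B A.

Definition is_succ_card (K Kp : Type) : Prop :=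
  lt_card K Kp /\ forall U : Type, lt_card K U -> le_card Kp U.

Definition infinite_set {T : Type} (A : T -> Prop) : Prop :=
  ~ exists l : list T, forall x, A x -> In x l.

Definition idx (n : nat) : Type := { i : nat | i < n }.

(* The partition property defining Theta_n, for theta = |T|:
   every f : T^n -> omega is constant on a product prod_{i<n} A_i
   of infinite subsets A_i of T.  n-tuples are functions idx n -> T. *)
Definition theta_prop (n : nat) (T : Type) : Prop :=
  forall f : (idx n -> T) -> nat,
    exists A : idx n -> (T -> Prop),
      (forall i, infinite_set (A i)) /\
      exists c : nat, forall x : idx n -> T, (forall i, A i (x i)) -> f x = c.

(* "Theta_n > |K|": Theta_n is the least cardinal with theta_prop n,
   so Theta_n > |K| means no cardinal theta <= |K| has theta_prop n
   (this also covers the case where no cardinal has the property). *)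
Definition Theta_gt (n : nat) (K : Type) : Prop :=
  forall U : Type, le_card U K -> ~ theta_prop n U.

From Stdlib Require Import Arith Lia List Cantor.
From Stdlib Require Import Classical ClassicalEpsilon FunctionalExtensionality ProofIrrelevance.
From mathcomp Require ssreflect ssrbool eqtype seq boolp wochoice.

(* Let |U| <= kappa^+.  Well-ordering U and cutting it at the first point whose
   initial segment has size > kappa embeds U into T + kappa, where T is a linear
   order all of whose initial segments have size <= kappa; order T + kappa by
   putting kappa as one block below T.  Colour an (n+1)-tuple by the position j
   of a largest entry x_j together with the colour of the other n entries under
   an n-colouring of the initial segment below x_j admitting no homogeneous
   product of infinite sets (it exists because Theta_n > kappa, pieces of size
   <= kappa being handled one at a time).  On a homogeneous product of infinite
   sets the position j is constant, and freezing the j-th entry yields a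
   homogeneous product of infinite subsets of the segment below it. *)

Module WellOrdering.
Import ssreflect ssrbool eqtype seq boolp wochoice.

Lemma exists_well_order (T : Type) : exists R : T -> T -> Prop,
  (forall x y, R x y \/ R y x) /\
  (forall x y z, R x y -> R y z -> R x z) /\
  (forall x y, R x y -> R y x -> x = y) /\
  (forall P : T -> Prop, (exists x, P x) -> exists m, P m /\ forall x, P x -> R m x).
Proof.
have [R woR] := @well_ordering_principle {classic T}.
have woT : wo_chain R predT by move=> A _; exact: woR.
have total x y : R x y \/ R y x by apply/orP; apply: (wo_chainW woT).
have anti x y : R x y -> R y x -> x = y.
  by move=> Rxy Ryx; apply: (wo_chain_antisymmetric woT) => //; apply/andP.
have minimum (P : T -> Prop) : (exists x, P x) -> exists m, P m /\ forall x, P x -> R m x.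
  move=> [x Px]; have [|m [[/asboolP Pm lbm] _]] := woR [pred w | `[< P w >]].
    by exists x; apply/asboolP.
  by exists m; split=> // y Py; apply: lbm; apply/asboolP.
exists (fun x y => R x y); do ![split] => //.
move=> x y z Rxy Ryz.
have [m [m3 lbm]] : exists m, (m = x \/ m = y \/ m = z) /\
    forall w, (w = x \/ w = y \/ w = z) -> R m w by apply: minimum; exists x; left.
case: m3 => [|[|]] em; subst m; first by apply: lbm; right; right.
- by rewrite (anti x y Rxy) //; apply: lbm; left.
- by rewrite -(anti y z Ryz) //; apply: lbm; right; left.
Qed.

End WellOrdering.

Lemma le_card_refl (A : Type) : le_card A A.
Proof. exists (fun x => x). auto. Qed.

Lemma le_card_trans (A B C : Type) : le_card A B -> le_card B C -> le_card A C.
Proof. intros [f Hf] [g Hg]. exists (fun x => g (f x)). auto. Qed.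

Lemma infinite_set_inhabited {T : Type} (A : T -> Prop) :
  infinite_set A -> exists x, A x.
Proof.
  intros HA. apply NNPP. intros N. apply HA. exists nil. intros x Ax. apply N. eauto.
Qed.

Lemma infinite_set_mono {T : Type} (A B : T -> Prop) :
  (forall x, A x -> B x) -> infinite_set A -> infinite_set B.
Proof. intros AB HA [l Hl]. apply HA. exists l. auto. Qed.

Lemma infinite_set_image {T W : Type} (A : T -> Prop) (g : T -> W) :
  (forall x y, A x -> A y -> g x = g y -> x = y) ->
  infinite_set A -> infinite_set (fun w => exists x, A x /\ g x = w).
Proof.
  intros Hg HA [l Hl].
  destruct (infinite_set_inhabited A HA) as [x0 _].
  assert (Hpre : forall w, exists x, (exists x', A x' /\ g x' = w) -> A x /\ g x = w).
  { intros w. destruct (classic (exists x', A x' /\ g x' = w)) as [[x Hx]|N].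
    - exists x. auto.
    - exists x0. tauto. }
  destruct (choice _ Hpre) as [pre Hpre'].
  apply HA. exists (map pre l). intros x Ax.
  assert (Hx : pre (g x) = x).
  { destruct (Hpre' (g x)) as [Ap Ep]; eauto. }
  rewrite <- Hx. apply in_map. apply Hl. eauto.
Qed.

Lemma infinite_set_pigeonhole {T : Type} (s : T -> nat) (m : nat) (A : T -> Prop) :
  (forall x, A x -> s x < m) -> infinite_set A ->
  exists t, infinite_set (fun x => A x /\ s x = t).
Proof.
  revert A. induction m as [|m IH]; intros A Hs HA.
  - destruct (infinite_set_inhabited A HA) as [x Ax]. specialize (Hs x Ax). lia.
  - destruct (classic (infinite_set (fun x => A x /\ s x = m))) as [Hm|Hm]; eauto.
    apply NNPP in Hm. destruct Hm as [l1 Hl1].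
    destruct (IH (fun x => A x /\ s x <> m)) as [t Ht].
    + intros x [Ax Hx]. specialize (Hs x Ax). lia.
    + intros [l2 Hl2]. apply HA. exists (l1 ++ l2). intros x Ax.
      apply in_or_app. destruct (Nat.eq_dec (s x) m); auto.
    + exists t. revert Ht. apply infinite_set_mono. tauto.
Qed.

Definition box_free (n : nat) (V : Type) (P : V -> Prop) (c : (idx n -> V) -> nat) : Prop :=
  forall A : idx n -> V -> Prop,
    (forall i, infinite_set (A i)) -> (forall i x, A i x -> P x) ->
    ~ exists c0, forall x, (forall i, A i (x i)) -> c x = c0.

Lemma not_theta_prop_iff (n : nat) (V : Type) :
  ~ theta_prop n V <-> exists c, box_free n V (fun _ => True) c.
Proof.
  split.
  - intros HV. apply not_all_ex_not in HV as [c Hc].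
    exists c. intros A HA _ Hhom. apply Hc. eauto.
  - intros [c Hc] HV. destruct (HV c) as [A [HA Hhom]]. exact (Hc A HA (fun _ _ _ => I) Hhom).
Qed.

(* The pigeonhole principle puts each side of a product of infinite sets into a
   single piece [s x = t] on which [g] is injective. *)
Lemma box_free_of_piecewise_injection (n : nat) (V W : Type) (P : V -> Prop)
    (s : V -> nat) (m : nat) (g : V -> W) :
  ~ theta_prop n W -> (forall x, P x -> s x < m) ->
  (forall x y, P x -> P y -> s x = s y -> g x = g y -> x = y) ->
  exists c, box_free n V P c.
Proof.
  intros HW Hs Hg. apply not_theta_prop_iff in HW as [f Hf].
  exists (fun z => f (fun i => g (z i))). intros A HA HP [c0 Hc0].
  assert (Ht : forall i, exists t, infinite_set (fun x => A i x /\ s x = t)).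
  { intros i. apply (infinite_set_pigeonhole s m); eauto. }
  destruct (choice _ Ht) as [t Hti].
  apply (Hf (fun i w => exists x, (A i x /\ s x = t i) /\ g x = w)); auto.
  - intros i. apply infinite_set_image; auto.
    intros x y [Ax Sx] [Ay Sy]. apply Hg; eauto. congruence.
  - exists c0. intros w Hw. destruct (choice _ Hw) as [z Hz].
    replace w with (fun i => g (z i)) by (apply functional_extensionality; apply Hz).
    apply Hc0. intros i. apply Hz.
Qed.

Lemma le_card_not_theta_prop (n : nat) (U W : Type) :
  le_card U W -> ~ theta_prop n W -> ~ theta_prop n U.
Proof.
  intros [f Hf] HW. apply not_theta_prop_iff.
  apply (box_free_of_piecewise_injection n U W _ (fun _ => 0) 1 f); auto.
Qed.

Lemma theta_prop_succ_infinite (n : nat) (U : Type) :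
  theta_prop (S n) U -> infinite_set (fun _ : U => True).
Proof.
  intros HU. destruct (HU (fun _ => 0)) as [A [HA _]].
  apply (infinite_set_mono (A (exist _ 0 (Nat.lt_0_succ n)))); auto.
Qed.

Lemma le_card_unit_not_infinite (U : Type) :
  le_card U unit -> ~ infinite_set (fun _ : U => True).
Proof.
  intros [f Hf] HU. destruct (infinite_set_inhabited _ HU) as [a _].
  apply HU. exists (a :: nil). intros x _. left. apply Hf. now destruct (f a), (f x).
Qed.

Lemma idx_eq {n : nat} (a b : idx n) : proj1_sig a = proj1_sig b -> a = b.
Proof. destruct a, b. apply subset_eq_compat. Qed.

Definition bump (j k : nat) : nat := if k <? j then k else S k.

Lemma bump_lt (n j k : nat) : k < n -> bump j k < S n.
Proof. unfold bump. destruct (Nat.ltb_spec k j); lia. Qed.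

Definition skip {n : nat} (j : idx (S n)) (k : idx n) : idx (S n) :=
  exist _ (bump (proj1_sig j) (proj1_sig k)) (bump_lt n _ _ (proj2_sig k)).

Lemma skip_neq {n : nat} (j : idx (S n)) (k : idx n) : skip j k <> j.
Proof.
  intros E. apply (f_equal (@proj1_sig _ _)) in E. simpl in E. unfold bump in E.
  destruct (Nat.ltb_spec (proj1_sig k) (proj1_sig j)); lia.
Qed.

Lemma skip_inj {n : nat} (j : idx (S n)) (k k' : idx n) : skip j k = skip j k' -> k = k'.
Proof.
  intros E. apply (f_equal (@proj1_sig _ _)) in E. simpl in E. unfold bump in E.
  apply idx_eq.
  destruct (Nat.ltb_spec (proj1_sig k) (proj1_sig j)), (Nat.ltb_spec (proj1_sig k') (proj1_sig j)); lia.
Qed.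

Lemma skip_surj {n : nat} (j i : idx (S n)) : i <> j -> exists k, skip j k = i.
Proof.
  destruct i as [i Hi], j as [j Hj]. intros Nij.
  assert (i <> j) by (intros ->; apply Nij, idx_eq; reflexivity).
  destruct (Nat.ltb_spec i j).
  - assert (Hk : i < n) by lia.
    exists (exist (fun x => x < n) i Hk). apply idx_eq. simpl. unfold bump.
    destruct (Nat.ltb_spec i j); lia.
  - assert (Hk : i - 1 < n) by lia.
    exists (exist (fun x => x < n) (i - 1) Hk). apply idx_eq. simpl. unfold bump.
    destruct (Nat.ltb_spec (i - 1) j); lia.
Qed.

Lemma box_update {I V : Type} (A : I -> V -> Prop) (p : I -> V) (i : I) (a : V) :
  (forall i', A i' (p i')) -> A i a ->
  exists x, (forall i', A i' (x i')) /\ x i = a /\ forall i', i' <> i -> x i' = p i'.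
Proof.
  intros Hp Ha.
  assert (Hx : forall i', exists v, A i' v /\ (i' = i -> v = a) /\ (i' <> i -> v = p i')).
  { intros i'. destruct (classic (i' = i)) as [->|N].
    - exists a. repeat split; auto. intros N. now destruct N.
    - exists (p i'). repeat split; auto. intros E. now destruct (N E). }
  destruct (choice _ Hx) as [x Hx']. exists x. firstorder.
Qed.

Lemma box_insert {n : nat} {V : Type} (A : idx (S n) -> V -> Prop) (j : idx (S n))
    (b : V) (z : idx n -> V) :
  A j b -> (forall k, A (skip j k) (z k)) ->
  exists x, (forall i, A i (x i)) /\ x j = b /\ forall k, x (skip j k) = z k.
Proof.
  intros Hb Hz.
  assert (Hx : forall i, exists v, A i v /\ (i = j -> v = b) /\ forall k, skip j k = i -> v = z k).
  { intros i. destruct (classic (i = j)) as [->|N].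
    - exists b. repeat split; auto. intros k E. destruct (skip_neq j k E).
    - destruct (skip_surj j i N) as [k <-]. exists (z k). repeat split; auto.
      + intros E. destruct (skip_neq j k E).
      + intros k' E. apply skip_inj in E. now subst. }
  destruct (choice _ Hx) as [x Hx']. exists x. repeat split; firstorder.
Qed.

Section MaxColouring.

Variables (n : nat) (V : Type) (D : V -> V -> Prop).
Hypothesis D_total : forall a b, D a b \/ D b a.
Hypothesis D_trans : forall a b c, D a b -> D b c -> D a c.

Lemma exists_max_index (x : idx (S n) -> V) : exists j, forall i, D (x i) (x j).
Proof.
  assert (Drefl : forall a, D a a) by (intros a; now destruct (D_total a a)).
  assert (Hm : forall m, m <= S n -> exists j, forall i, proj1_sig i < m -> D (x i) (x j)).
  { induction m as [|m IH]; intros Hm.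
    - exists (exist _ 0 (Nat.lt_0_succ n)). intros i Hi. lia.
    - destruct (IH ltac:(lia)) as [j Hj].
      set (im := exist (fun i => i < S n) m Hm).
      destruct (D_total (x j) (x im)) as [H|H]; [exists im|exists j]; intros i Hi;
        destruct (Nat.eq_dec (proj1_sig i) m) as [E|E].
      + replace i with im by now apply idx_eq. apply Drefl.
      + apply D_trans with (x j); [apply Hj; lia | exact H].
      + replace i with im by now apply idx_eq. exact H.
      + apply Hj. lia. }
  destruct (Hm (S n) (le_n _)) as [j Hj]. exists j. intros i. apply Hj, proj2_sig.
Qed.

Hypothesis D_downsets_box_free : forall y, exists c, box_free n V (fun x => D x y) c.

Theorem not_theta_prop_succ : ~ theta_prop (S n) V.
Proof.
  destruct (choice _ exists_max_index) as [top Htop].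
  destruct (choice _ D_downsets_box_free) as [col Hcol].
  intros HV.
  destruct (HV (fun x => Cantor.to_nat
                  (proj1_sig (top x), col (x (top x)) (fun k => x (skip (top x) k)))))
    as [A [HA [c0 Hc0]]].
  destruct (choice _ (fun i => infinite_set_inhabited _ (HA i))) as [p Hp].
  set (j := top p).
  assert (Hhom : forall x, (forall i, A i (x i)) ->
            top x = j /\ col (x j) (fun k => x (skip j k)) = col (p j) (fun k => p (skip j k))).
  { intros x Hx.
    injection (Cantor.to_nat_inj _ _ (eq_trans (Hc0 x Hx) (eq_sym (Hc0 p Hp)))) as Ej Ec.
    apply idx_eq in Ej. rewrite Ej in Ec. auto. }
  apply (Hcol (p j) (fun k => A (skip j k))); auto.
  - intros k a Ha.
    destruct (box_update A p (skip j k) a Hp Ha) as [x [Hx [Hxa Hxp]]].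
    rewrite <- Hxa, <- (Hxp j (not_eq_sym (skip_neq j k))), <- (proj1 (Hhom x Hx)).
    apply Htop.
  - exists (col (p j) (fun k => p (skip j k))). intros z Hz.
    destruct (box_insert A j (p j) z (Hp j) Hz) as [x [Hx [Hxj Hxz]]].
    rewrite <- (proj2 (Hhom x Hx)), Hxj.
    f_equal. apply functional_extensionality. intros k. now rewrite Hxz.
Qed.

End MaxColouring.

Section SumOrder.

Variables (K T : Type) (k0 : K) (R : T -> T -> Prop).
Hypothesis R_total : forall x y, R x y \/ R y x.
Hypothesis R_trans : forall x y z, R x y -> R y z -> R x z.
Hypothesis R_downsets_small : forall u, le_card {x | R x u} K.

Definition sum_le (a b : T + K) : Prop :=
  match a, b with
  | inr _, _ => True
  | inl _, inr _ => False
  | inl x, inl y => R x y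
  end.

Lemma sum_le_total (a b : T + K) : sum_le a b \/ sum_le b a.
Proof. destruct a, b; simpl; auto. Qed.

Lemma sum_le_trans (a b c : T + K) : sum_le a b -> sum_le b c -> sum_le a c.
Proof. destruct a, b, c; simpl; eauto; tauto. Qed.

Lemma sum_le_downsets_box_free (n : nat) :
  ~ theta_prop n K -> forall y, exists c, box_free n (T + K) (fun a => sum_le a y) c.
Proof.
  intros HK [u|k].
  - destruct (R_downsets_small u) as [h Hh].
    apply (box_free_of_piecewise_injection n _ K _
             (fun a => match a with inl _ => 1 | inr _ => 0 end) 2
             (fun a => match a with
                       | inl x => match excluded_middle_informative (R x u) with
                                  | left Hx => h (exist _ x Hx)
                                  | right _ => k0
                                  end
                       | inr k => k
                       end)); auto.
    + intros [x|k]; lia.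
    + intros [x|k] [y|l]; simpl; try discriminate; try congruence.
      intros Hx Hy _. do 2 destruct excluded_middle_informative; try tauto.
      intros E. apply Hh in E. now injection E as ->.
  - apply (box_free_of_piecewise_injection n _ K _ (fun _ => 0) 1
             (fun a => match a with inl _ => k0 | inr k => k end)); auto.
    intros [x|k1] [y|l]; simpl; tauto || congruence.
Qed.

Lemma not_theta_prop_succ_sum (n : nat) : ~ theta_prop n K -> ~ theta_prop (S n) (T + K).
Proof.
  intros HK. apply (not_theta_prop_succ n _ sum_le sum_le_total sum_le_trans).
  exact (sum_le_downsets_box_free n HK).
Qed.

End SumOrder.

Lemma le_card_segment_remove_top (U K : Type) (k0 : K) (R : U -> U -> Prop) (b : U) :
  le_card {y | R y b} ({y | R y b /\ y <> b} + K).
Proof.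
  exists (fun y => match excluded_middle_informative (proj1_sig y = b) with
                   | left _ => inr k0
                   | right N => inl (exist _ (proj1_sig y) (conj (proj2_sig y) N))
                   end).
  intros [y Hy] [y' Hy']. simpl.
  do 2 destruct excluded_middle_informative; intros E; try discriminate.
  - apply subset_eq_compat. congruence.
  - injection E as ->. apply subset_eq_compat. reflexivity.
Qed.

Lemma le_succ_card_embeds_in_sum (K Kplus U : Type) (k0 : K) :
  is_succ_card K Kplus -> le_card U Kplus ->
  exists (T : Type) (R : T -> T -> Prop),
    (forall x y, R x y \/ R y x) /\ (forall x y z, R x y -> R y z -> R x z) /\
    (forall u, le_card {x | R x u} K) /\ le_card U (T + K).
Proof.
  intros [_ Hmin] HU.
  destruct (WellOrdering.exists_well_order U) as (R & Rtot & Rtr & Ranti & Rmin).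
  destruct (classic (exists b, ~ le_card {y | R y b} K)) as [Hbig|Hsmall].
  - destruct (Rmin _ Hbig) as [b [Hb Hbmin]].
    exists {y | R y b /\ y <> b}, (fun x y => R (proj1_sig x) (proj1_sig y)).
    split; [|split; [|split]].
    + intros x y. apply Rtot.
    + intros x y z. apply Rtr.
    + intros [u [Rub Nub]].
      assert (Hu : le_card {y | R y u} K).
      { apply NNPP. intros N. apply Nub, Ranti; auto. }
      apply (le_card_trans _ {y | R y u}); auto.
      exists (fun x : {x : {y | R y b /\ y <> b} | R (proj1_sig x) u} =>
                exist (fun y => R y u) (proj1_sig (proj1_sig x)) (proj2_sig x)).
      intros [[x Hx] Rx] [[y Hy] Ry] E. injection E as ->.
      apply subset_eq_compat, subset_eq_compat. reflexivity.
    + apply (le_card_trans _ Kplus); auto. apply Hmin. split.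
      * exists inr. intros x y E. now injection E.
      * intros HK. apply Hb.
        apply (le_card_trans _ _ _ (le_card_segment_remove_top U K k0 R b) HK).
  - exists U, R. split; [|split; [|split]]; auto.
    + intros u. apply NNPP. eauto.
    + exists inl. intros x y E. now injection E.
Qed.

Lemma le_succ_card_empty_unit (K Kplus : Type) :
  ~ inhabited K -> is_succ_card K Kplus -> le_card Kplus unit.
Proof.
  intros NK [_ Hmin]. apply Hmin. split.
  - exists (fun _ => tt). intros x. destruct (NK (inhabits x)).
  - intros [h _]. exact (NK (inhabits (h tt))).
Qed.

Theorem proposition5p2 (n : nat) (K Kplus : Type) :
  1 <= n ->
  is_succ_card K Kplus ->
  Theta_gt n K ->
  Theta_gt (S n) Kplus.
Proof.
  intros _ Hsucc HK U HU HUth.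
  assert (HKth : ~ theta_prop n K) by exact (HK K (le_card_refl K)).
  destruct (classic (inhabited K)) as [[k0]|NK].
  - destruct (le_succ_card_embeds_in_sum K Kplus U k0 Hsucc HU)
      as (T & R & Rtot & Rtr & Rsmall & HUT).
    revert HUth. apply (le_card_not_theta_prop _ _ _ HUT).
    exact (not_theta_prop_succ_sum K T k0 R Rtot Rtr Rsmall n HKth).
  - apply (le_card_unit_not_infinite U).
    + exact (le_card_trans _ _ _ HU (le_succ_card_empty_unit K Kplus NK Hsucc)).
    + exact (theta_prop_succ_infinite n U HUth).
Qed.
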